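(* Let $G$ be a 2-step nilpotent (connected, simply connected) Lie group with Lie algebra $\mathfrak{g}=\mathfrak{v}\oplus\mathfrak{z}$, where $\mathfrak{z}$ is the center, and let $\langle\cdot,\cdot\rangle$ be an inner product on $\mathfrak{v}$. Suppose that $J_\eta$ has rank $2$ for all $\eta\in\mathfrak{z}^*\setminus\{0\}$. Then $G$ satisfies Assumption (A) with the sublaplacian $L$ associated with $\langle\cdot,\cdot\rangle$, and also with any other sublaplacian associated with an inner product on any linear complement of $\mathfrak{z}$. Moreover, let $G_\mathbb{C}$ be the complexification of $G$, regarded as a real 2-step group with Lie algebra $\mathfrak{g}_\mathbb{C}=\mathfrak{v}_\mathbb{C}\oplus\mathfrak{z}_\mathbb{C}$, and endow $\mathfrak{v}_\mathbb{C}=\mathfrak{v}\oplus i\mathfrak{v}$ with the real inner product induced by $\langle\cdot,\cdot\rangle$ (i.e. $\langle x_R+ix_I,x'_R+ix'_I\rangle=\langle x_R,x'_R\rangle+\langle x_I,x_I'\rangle$). Then $G_\mathbb{C}$ with the associated sublaplacian satisfies Assumption (A).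
   Context: For a 2-step group with Lie algebra $\mathfrak{g}=\mathfrak{v}\oplus\mathfrak{z}$ ($\mathfrak{z}$ the center, $\mathfrak{v}$ a complement) and an inner product $\langle\cdot,\cdot\rangle$ on $\mathfrak{v}$, the associated sublaplacian is $L=-\sum_jX_j^2$ with $\{X_j\}$ an orthonormal basis of $\mathfrak{v}$, and for $\eta\in\mathfrak{z}^*$, $J_\eta$ is the skew-adjoint endomorphism of $\mathfrak{v}$ with $\eta([x,x'])=\langle J_\eta x,x'\rangle$ for all $x,x'\in\mathfrak{v}$. Assumption (A) for $(G,L)$: there exist integers $r_1,\dots,r_k>0$ and an orthogonal decomposition $\mathfrak{v}=\mathfrak{v}_1\oplus\dots\oplus\mathfrak{v}_k$ with orthogonal projections $P_j$ such that for all $\eta\in\mathfrak{z}^*\setminus\{0\}$ and all $j$, $J_\eta P_j=P_jJ_\eta$ and $J_\eta^2P_j$ has rank $2r_j$ and a unique nonzero eigenvalue. *)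

From HB Require Import structures.
From mathcomp Require Import all_boot all_order all_algebra.
From mathcomp Require Import reals.
Set Implicit Arguments. Unset Strict Implicit. Unset Printing Implicit Defensive.
Import Order.TTheory GRing.Theory Num.Theory.
Local Open Scope ring_scope.

Section Defs.
Variable R : realType.

Definition two_step_bracket (N : nat) (br : 'rV[R]_N -> 'rV[R]_N -> 'rV[R]_N) :=
  [/\ (forall (a : R) x y w, br (a *: x + y) w = a *: br x w + br y w),
      (forall (a : R) x y w, br w (a *: x + y) = a *: br w x + br w y),
      (forall x, br x x = 0),
      (forall x y w, br (br x y) w = 0) &
      (exists x y, br x y != 0)].

Definition central (N : nat) (br : 'rV[R]_N -> 'rV[R]_N -> 'rV[R]_N) (y : 'rV[R]_N) :=
  forall w, br y w = 0.

(* A complement v of z together with an inner product on v is encoded by an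
   orthonormal basis of v: the rows X_1..X_n of X.  [complement br X] says the
   rows of X are linearly independent, their span meets z trivially and
   span + z = g. *)
Definition complement (N n : nat) (br : 'rV[R]_N -> 'rV[R]_N -> 'rV[R]_N)
  (X : 'M[R]_(n, N)) :=
  (forall a : 'rV[R]_n, central br (a *m X) -> a = 0) /\
  (forall w : 'rV[R]_N, exists a : 'rV[R]_n, central br (w - a *m X)).

(* linear functionals on g; eta ∈ z^* is represented by (the restriction to z
   of) a functional e on g. *)
Definition eta (N : nat) (e : 'rV[R]_N) (y : 'rV[R]_N) : R := (y *m e^T) 0 0.

Definition nonzero_on_center (N : nat) (br : 'rV[R]_N -> 'rV[R]_N -> 'rV[R]_N)
  (e : 'rV[R]_N) := exists y, central br y /\ eta e y != 0.

(* Matrix of J_eta in the orthonormal basis X (acting on coordinate row vectors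
   x |-> x *m J): <x J, x'> = eta([x, x']). *)
Definition Jmx (N n : nat) (br : 'rV[R]_N -> 'rV[R]_N -> 'rV[R]_N)
  (X : 'M[R]_(n, N)) (e : 'rV[R]_N) : 'M[R]_n :=
  \matrix_(i, j) eta e (br (row i X) (row j X)).

(* Orthogonal decompositions v = v_1 + ... + v_k are given by their orthogonal
   projections P_j (symmetric idempotents, mutually orthogonal, summing to 1).
   Operators act on row vectors, so J_eta^2 P_j is the matrix P_j *m J^2. *)
Definition assumptionA (N n : nat) (br : 'rV[R]_N -> 'rV[R]_N -> 'rV[R]_N)
  (X : 'M[R]_(n, N)) :=
  exists (k : nat) (r : 'I_k -> nat) (P : 'I_k -> 'M[R]_n),
  [/\ (forall j, (0 < r j)%N),
      (forall j, P j *m P j = P j /\ (P j)^T = P j),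
      (forall i j, i != j -> P i *m P j = 0),
      \sum_j P j = 1%:M &
      (forall e, nonzero_on_center br e -> forall j,
         let J := Jmx br X e in
         [/\ J *m P j = P j *m J,
             \rank (P j *m (J *m J)) = (2 * r j)%N &
             exists mu : R, [/\ mu != 0, eigenvalue (P j *m (J *m J)) mu &
               forall nu : R, nu != 0 -> eigenvalue (P j *m (J *m J)) nu ->
                 nu = mu]])].

(* Complexification g_C = g ⊕ i g, as a real Lie algebra on R^(N+N):
   x = row_mx x_R x_I stands for x_R + i x_I. *)
Definition cbr (N : nat) (br : 'rV[R]_N -> 'rV[R]_N -> 'rV[R]_N)
  (x y : 'rV[R]_(N + N)) : 'rV[R]_(N + N) :=
  row_mx (br (lsubmx x) (lsubmx y) - br (rsubmx x) (rsubmx y))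
         (br (lsubmx x) (rsubmx y) + br (rsubmx x) (lsubmx y)).

(* v_C = v ⊕ i v with the induced real inner product: orthonormal basis
   X_1..X_n, iX_1..iX_n. *)
Definition cX (N n : nat) (X : 'M[R]_(n, N)) : 'M[R]_(n + n, N + N) :=
  block_mx X 0 0 X.

End Defs.

From Pilot Require Import Defs.
From mathcomp Require Import all_boot all_order all_algebra.
From mathcomp Require Import reals.
From mathcomp Require Import ring lra.
Set Implicit Arguments. Unset Strict Implicit. Unset Printing Implicit Defensive.
Import Order.TTheory GRing.Theory Num.Theory.
Local Open Scope ring_scope.

(* For a skew matrix J of rank at most 2 one has J A J = (tr(J A)/2) J for
   every skew A, because J = B^T S B with S a 2x2 skew matrix.  Hence
   J^3 = -(|J|^2/2) J, so J^2 is a nonzero multiple of an idempotent of trace 2: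
   it has rank 2 and a single nonzero eigenvalue, and Assumption (A) holds
   with one block (k = 1, r = 1).  Another complement of the center replaces
   J_eta by a congruent A J_eta A^T, still skew, nonzero and of rank at most 2.
   On the complexification J_eta is the block matrix K = [J1 J2; J2 -J1] of
   two such maps; polarizing the identity for J1 + J2 gives
   K^3 = -((|J1|^2 + |J2|^2)/2) K, hence Assumption (A) with k = 1, r = 2. *)

Lemma mxtrace_idem (F : fieldType) n (M : 'M[F]_n) :
  M *m M = M -> \tr M = (\rank M)%:R.
Proof.
move=> MM.
have [C' C'C] := row_fullP (col_base_full M).
have [D' DD'] := row_freeP (row_base_free M).
have CD := mulmx_base M.
move: (col_base M) (row_base M) CD C'C DD' => C D CD C'C DD'.
have DC : D *m C = 1%:M.
  have -> : D *m C = C' *m ((C *m D) *m (C *m D)) *m D'.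
    by rewrite !mulmxA C'C mul1mx -!mulmxA DD' mulmx1.
  rewrite CD MM; have -> : C' *m M *m D' = C' *m (C *m D) *m D' by rewrite CD.
  by rewrite !mulmxA C'C mul1mx DD'.
have -> : \tr M = \tr (C *m D) by rewrite CD.
by rewrite mxtrace_mulC DC mxtrace1.
Qed.

Definition unique_nonzero_eigenvalue (F : fieldType) n (M : 'M[F]_n) :=
  exists mu : F, [/\ mu != 0, eigenvalue M mu &
    forall nu : F, nu != 0 -> eigenvalue M nu -> nu = mu].

(* [c^-1 M] is an idempotent of trace [k]. *)
Lemma scaled_idem_rank (F : numFieldType) n (M : 'M[F]_n) (c : F) k :
  c != 0 -> M *m M = c *: M -> \tr M = c * k%:R -> \rank M = k.
Proof.
move=> c0 MM trM.
have idem : (c^-1 *: M) *m (c^-1 *: M) = c^-1 *: M.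
  by rewrite -scalemxAl -scalemxAr MM !scalerA mulrC mulrA mulfV // mul1r.
have := mxtrace_idem idem.
rewrite mxrank_scale_nz ?invr_eq0 // mxtraceZ trM mulrA mulVf // mul1r.
by move/eqP; rewrite eqr_nat => /eqP.
Qed.

Lemma scaled_idem_eigenvalue (F : fieldType) n (M : 'M[F]_n) (c : F) :
  c != 0 -> M != 0 -> M *m M = c *: M -> unique_nonzero_eigenvalue M.
Proof.
move=> c0 M0 MM; exists c; split => //.
  have [i Mi] : exists i, row i M != 0.
    apply/existsP; apply: contraR M0 => /existsPn M0.
    by apply/eqP/row_matrixP => i; rewrite row0; apply/eqP/negbNE/M0.
  by apply/eigenvalueP; exists (row i M); rewrite // -row_mul MM !rowE scalemxAr.
move=> nu nu0 /eigenvalueP [v vM v0].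
have : (nu * nu) *: v = (c * nu) *: v.
  by rewrite -scalerA -vM scalemxAl -vM -mulmxA MM -scalemxAr vM scalerA.
move/eqP; rewrite -subr_eq0 -scalerBl scaler_eq0 (negbTE v0) orbF.
by rewrite -mulrBl mulf_eq0 subr_eq0 (negbTE nu0) orbF => /eqP.
Qed.

Section SkewMatrices.
Variable F : numFieldType.

Lemma skew_mxE n (S : 'M[F]_n) : S^T = -S -> forall i j, S j i = - S i j.
Proof. by move=> skS i j; have /matrixP/(_ i j) := skS; rewrite !mxE. Qed.

Lemma skew_mx_diag n (S : 'M[F]_n) : S^T = -S -> forall i, S i i = 0.
Proof.
move=> skS i; have /eqP := skew_mxE skS i i.
by rewrite -addr_eq0 -mulr2n -mulr_natr mulf_eq0 pnatr_eq0 orbF => /eqP.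
Qed.

Lemma skew_mx_small_sandwich r (S T : 'M[F]_r) : (r <= 2)%N ->
  S^T = -S -> T^T = -T -> S *m T *m S = (\tr (S *m T) / 2) *: S.
Proof.
case: r S T => [|[|[|r]]] // S T _ skS skT; apply/matrixP => i j.
- by case: i.
- by rewrite !ord1 !mxE big_ord1 !(skew_mx_diag skS) !mulr0.
have lt2 (k : 'I_2) : k = ord0 \/ k = lift ord0 ord0.
  by case: k => [[|[|k]] lt_k2]; [left|right|]; rewrite //; apply: val_inj.
rewrite !mxE /mxtrace !big_ord_recl !big_ord0 !mxE !big_ord_recl !big_ord0.
rewrite !(skew_mx_diag skS) !(skew_mx_diag skT).
rewrite (skew_mxE skS ord0 (lift ord0 ord0)) (skew_mxE skT ord0 (lift ord0 ord0)).
have n2 : (2 : F) != 0 by rewrite pnatr_eq0.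
by case: (lt2 i) => ->; case: (lt2 j) => ->;
  rewrite ?(skew_mx_diag skS) ?(skew_mxE skS ord0 (lift ord0 ord0)); field.
Qed.

Definition trace_sandwich n (J : 'M[F]_n) :=
  forall A : 'M_n, A^T = -A -> J *m A *m J = (\tr (J *m A) / 2) *: J.

(* [J = B^T S B] with [B] a basis of the row space of [J] and [S] skew of
   size [\rank J <= 2]. *)
Lemma skew_rank_le2_sandwich n (J : 'M[F]_n) :
  J^T = -J -> (\rank J <= 2)%N -> trace_sandwich J.
Proof.
move=> skJ rJ A skA.
have JRB : J *m pinvmx (row_base J) *m row_base J = J.
  by apply: mulmxKpV; rewrite eq_row_base submx_refl.
move: (\rank J) rJ (row_base J) (pinvmx (row_base J)) JRB => r r2 B Rm JRB.
have JBR : J = B^T *m Rm^T *m J.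
  have /eqP := congr1 trmx JRB; rewrite !trmx_mul skJ !mulmxN eqr_opp mulmxA.
  by move/eqP ->.
set S := Rm^T *m J *m Rm.
have JS : J = B^T *m S *m B.
  by rewrite {1}JBR -JRB /S !mulmxA.
have skS : S^T = -S.
  by rewrite /S !trmx_mul trmxK skJ ?mulmxN ?mulNmx ?mulmxN !mulmxA.
have skBAB : (B *m A *m B^T)^T = - (B *m A *m B^T).
  by rewrite !trmx_mul trmxK skA ?mulmxN ?mulNmx ?mulmxN !mulmxA.
have -> : J *m A *m J = B^T *m (S *m (B *m A *m B^T) *m S) *m B.
  by rewrite {1}JS {1}JS !mulmxA.
have -> : \tr (J *m A) = \tr (S *m (B *m A *m B^T)).
  by rewrite {1}JS -!mulmxA mxtrace_mulC !mulmxA.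
by rewrite skew_mx_small_sandwich // -scalemxAr -scalemxAl -JS.
Qed.

End SkewMatrices.

Section RealSkewMatrices.
Variable F : realFieldType.

Definition mxsqnorm n (J : 'M[F]_n) := \sum_i \sum_j J i j ^+ 2.

Lemma mxsqnorm_ge0 n (J : 'M[F]_n) : 0 <= mxsqnorm J.
Proof. by apply: sumr_ge0 => i _; apply: sumr_ge0 => j _; apply: sqr_ge0. Qed.

Lemma mxsqnorm_eq0 n (J : 'M[F]_n) : (mxsqnorm J == 0) = (J == 0).
Proof.
apply/idP/eqP => [|->]; last first.
  by rewrite /mxsqnorm big1 // => i _; rewrite big1 // => j _; rewrite mxE expr0n.
rewrite psumr_eq0 => [/allP J0|i _]; last by apply: sumr_ge0 => j _; apply: sqr_ge0.
apply/matrixP => i j; have := J0 i (mem_index_enum i).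
rewrite psumr_eq0 => [/allP/(_ j (mem_index_enum j))|k _]; last exact: sqr_ge0.
by rewrite sqrf_eq0 mxE => /eqP.
Qed.

Lemma mxtrace_skew_sqr n (J : 'M[F]_n) : J^T = -J -> \tr (J *m J) = - mxsqnorm J.
Proof.
move=> skJ; rewrite /mxtrace /mxsqnorm -sumrN; apply: eq_bigr => i _.
by rewrite mxE -sumrN; apply: eq_bigr => j _; rewrite (skew_mxE skJ j i); ring.
Qed.

(* The cross terms of the cube are those of the sandwich identity for [J1 + J2]. *)
Lemma sandwich_block_cube n (J1 J2 : 'M[F]_n) :
  J1^T = -J1 -> J2^T = -J2 ->
  trace_sandwich J1 -> trace_sandwich J2 -> trace_sandwich (J1 + J2) ->
  let K := block_mx J1 J2 J2 (-J1) in
  K *m K *m K = ((\tr (J1 *m J1) + \tr (J2 *m J2)) / 2) *: K.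
Proof.
move=> sk1 sk2 sw1 sw2 sw12 K.
have P1 := sw12 _ sk1; have P2 := sw12 _ sk2.
rewrite !mulmxDl !mulmxDr (sw1 _ sk1) (sw2 _ sk1) in P1.
rewrite !mulmxDl !mulmxDr (sw1 _ sk2) (sw2 _ sk2) in P2.
rewrite /K !mulmx_block ?mulmxDl ?mulmxDr ?mulmxN ?mulNmx ?opprK.
rewrite (sw1 _ sk1) (sw2 _ sk2) (sw1 _ sk2) (sw2 _ sk1) scale_block_mx.
rewrite !mxtraceD (mxtrace_mulC J2 J1) in P1 P2 *.
move: P1 P2.
move: (\tr (J1 *m J1)) (\tr (J2 *m J2)) (\tr (J1 *m J2)) => a b d.
move: (J1 *m J1 *m J2) (J2 *m J1 *m J1) (J1 *m J2 *m J2) (J2 *m J2 *m J1).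
move=> X1 X2 Y1 Y2 P1 P2.
have n2 : (2 : F) != 0 by rewrite pnatr_eq0.
by congr block_mx; apply/matrixP => i j; move/matrixP/(_ i j): P1;
  move/matrixP/(_ i j): P2; rewrite !mxE => P2 P1; lra.
Qed.

End RealSkewMatrices.

Section LinearFunctional.
Variables (R : realType) (N : nat) (e : 'rV[R]_N).

Lemma etaD x y : Defs.eta e (x + y) = Defs.eta e x + Defs.eta e y.
Proof. by rewrite /Defs.eta mulmxDl mxE. Qed.

Lemma etaZ a x : Defs.eta e (a *: x) = a * Defs.eta e x.
Proof. by rewrite /Defs.eta -scalemxAl mxE. Qed.

Lemma etaN x : Defs.eta e (- x) = - Defs.eta e x.
Proof. by rewrite /Defs.eta mulNmx mxE. Qed.

Lemma eta0 : Defs.eta e 0 = 0.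
Proof. by rewrite /Defs.eta mul0mx mxE. Qed.

Lemma eta_sum I (r : seq I) (P : pred I) (f : I -> 'rV_N) :
  Defs.eta e (\sum_(i <- r | P i) f i) = \sum_(i <- r | P i) Defs.eta e (f i).
Proof. exact: (big_morph _ etaD eta0). Qed.

End LinearFunctional.

Lemma eta_addl (R : realType) N (e1 e2 x : 'rV[R]_N) :
  Defs.eta (e1 + e2) x = Defs.eta e1 x + Defs.eta e2 x.
Proof. by rewrite /Defs.eta linearD /= mulmxDr mxE. Qed.

Lemma eta_row_mx (R : realType) N (e : 'rV[R]_(N + N)) (u v : 'rV[R]_N) :
  Defs.eta e (row_mx u v) = Defs.eta (lsubmx e) u + Defs.eta (rsubmx e) v.
Proof. by rewrite /Defs.eta -{1}(hsubmxK e) tr_row_mx mul_row_col mxE. Qed.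

Section TwoStepBracket.
Variables (R : realType) (N : nat) (br : 'rV[R]_N -> 'rV[R]_N -> 'rV[R]_N).
Hypothesis br2 : two_step_bracket br.

Lemma brDl x y w : br (x + y) w = br x w + br y w.
Proof. by case: br2 => lin _ _ _ _; have := lin 1 x y w; rewrite !scale1r. Qed.

Lemma brDr x y w : br w (x + y) = br w x + br w y.
Proof. by case: br2 => _ lin _ _ _; have := lin 1 x y w; rewrite !scale1r. Qed.

Lemma br0l w : br 0 w = 0.
Proof. by apply: (addrI (br 0 w)); rewrite -brDl !addr0. Qed.

Lemma br0r w : br w 0 = 0.
Proof. by apply: (addrI (br w 0)); rewrite -brDr !addr0. Qed.

Lemma brZl a x w : br (a *: x) w = a *: br x w.
Proof. by case: br2 => lin _ _ _ _; rewrite -[a *: x]addr0 lin br0l addr0. Qed.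

Lemma brZr a x w : br w (a *: x) = a *: br w x.
Proof. by case: br2 => _ lin _ _ _; rewrite -[a *: x]addr0 lin br0r addr0. Qed.

Lemma brC x y : br y x = - br x y.
Proof.
case: br2 => _ _ brxx _ _; apply/eqP; rewrite -addr_eq0 addrC.
by have := brxx (x + y); rewrite brDl !brDr !brxx add0r addr0 => ->.
Qed.

Lemma br_central x y : central br (br x y).
Proof. by case: br2 => _ _ _ nil2 _ w; apply: nil2. Qed.

Lemma central_brr y w : central br y -> br w y = 0.
Proof. by move=> zy; rewrite brC zy oppr0. Qed.

Lemma br_suml I (r : seq I) (P : pred I) (f : I -> 'rV_N) w :
  br (\sum_(i <- r | P i) f i) w = \sum_(i <- r | P i) br (f i) w.
Proof. by apply: (big_morph (br^~ w)); [move=> x y; apply: brDl | apply: br0l]. Qed.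

Lemma br_sumr I (r : seq I) (P : pred I) (f : I -> 'rV_N) w :
  br w (\sum_(i <- r | P i) f i) = \sum_(i <- r | P i) br w (f i).
Proof. by apply: (big_morph (br w)); [move=> x y; apply: brDr | apply: br0r]. Qed.

Lemma Jmx_skew n (X : 'M[R]_(n, N)) e : (Jmx br X e)^T = - Jmx br X e.
Proof. by apply/matrixP => i j; rewrite !mxE brC etaN. Qed.

Lemma eta_br_mulmx n (X : 'M[R]_(n, N)) e (a b : 'rV[R]_n) :
  Defs.eta e (br (a *m X) (b *m X)) = (a *m Jmx br X e *m b^T) 0 0.
Proof.
rewrite (mulmx_sum_row a) (mulmx_sum_row b) br_suml eta_sum !mxE.
under [RHS]eq_bigr do rewrite !mxE mulr_suml.
rewrite [RHS]exchange_big /=; apply: eq_bigr => k _.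
rewrite brZl br_sumr etaZ eta_sum mulr_sumr; apply: eq_bigr => l _.
by rewrite brZr etaZ !mxE; ring.
Qed.

Lemma Jmx_congr m n (X : 'M[R]_(n, N)) (Y : 'M[R]_(m, N)) (A : 'M[R]_(m, n)) e :
  (forall i, central br (row i Y - row i A *m X)) ->
  Jmx br Y e = A *m Jmx br X e *m A^T.
Proof.
move=> zY; apply/matrixP => i j; rewrite mxE.
rewrite -[row i Y](subrK (row i A *m X)) -[row j Y](subrK (row j A *m X)).
rewrite brDl zY brDr (central_brr _ (zY j)) !add0r eta_br_mulmx.
by rewrite -!row_mul !mxE; apply: eq_bigr => k _; rewrite !mxE.
Qed.

Lemma Jmx_neq0_nonzero_on_center n (X : 'M[R]_(n, N)) e :
  Jmx br X e != 0 -> nonzero_on_center br e.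
Proof.
move=> J0.
have /existsP[i /existsP[j Jij]] : [exists i, exists j, Jmx br X e i j != 0].
  apply: contraR J0 => /existsPn J0; apply/eqP/matrixP => i j.
  by have /existsPn/(_ j)/negbNE/eqP -> := J0 i; rewrite mxE.
by exists (br (row i X) (row j X)); split; [apply: br_central | rewrite mxE in Jij].
Qed.

End TwoStepBracket.

Lemma Jmx_addr (R : realType) N n (br : 'rV[R]_N -> 'rV[R]_N -> 'rV[R]_N)
  (X : 'M[R]_(n, N)) e1 e2 :
  Jmx br X (e1 + e2) = Jmx br X e1 + Jmx br X e2.
Proof. by apply/matrixP => i j; rewrite !mxE eta_addl. Qed.

Lemma complement_row_decomp (R : realType) N n m
  (br : 'rV[R]_N -> 'rV[R]_N -> 'rV[R]_N) (X : 'M[R]_(n, N)) (Y : 'M[R]_(m, N)) :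
  complement br X ->
  exists A : 'M[R]_(m, n), forall i, central br (row i Y - row i A *m X).
Proof.
case=> _ decomp; have /fin_all_exists [a za] :
  forall i, exists a : 'rV_n, central br (row i Y - a *m X) by move=> i; apply: decomp.
by exists (\matrix_i a i) => i; rewrite rowK.
Qed.

Lemma assumptionA_single_block (R : realType) N m
  (br : 'rV[R]_N -> 'rV[R]_N -> 'rV[R]_N) (Y : 'M[R]_(m, N)) r : (0 < r)%N ->
  (forall e, nonzero_on_center br e -> exists2 c : R, c != 0 &
     let J := Jmx br Y e in
     J *m J *m J = c *: J /\ \tr (J *m J) = c * (2 * r)%:R) ->
  assumptionA br Y.
Proof.
move=> r0 cube; exists 1%N, (fun=> r), (fun=> 1%:M).
split=> [//|j|i j||e nz j]; rewrite ?mulmx1 ?trmx1 ?ord1 ?eqxx ?big_ord1 //.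
have [c c0 [JJJ trJJ]] := cube e nz; rewrite /= mulmx1 !mul1mx.
set M := Jmx br Y e *m Jmx br Y e in trJJ *.
have MM : M *m M = c *: M by rewrite mulmxA JJJ -scalemxAl.
have rM : \rank M = (2 * r)%N by apply: scaled_idem_rank c0 MM trJJ.
have M0 : M != 0.
  apply/eqP => M0; move: rM; rewrite M0 mxrank0 => /esym/eqP.
  by rewrite muln_eq0 /= eqn0Ngt r0.
by split=> //; apply: scaled_idem_eigenvalue c0 M0 MM.
Qed.

Section RankTwo.
Variables (R : realType) (N : nat) (br : 'rV[R]_N -> 'rV[R]_N -> 'rV[R]_N).
Hypothesis br2 : two_step_bracket br.

Lemma assumptionA_rank_le2 m (Y : 'M[R]_(m, N)) :
  (forall e, \rank (Jmx br Y e) <= 2)%N ->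
  (forall e, nonzero_on_center br e -> Jmx br Y e != 0) ->
  assumptionA br Y.
Proof.
move=> rJ J0; apply: (assumptionA_single_block (r := 1)) => // e nz.
have skJ := Jmx_skew br2 Y e; set J := Jmx br Y e in skJ *.
exists (\tr (J *m J) / 2); last split.
- rewrite mulf_eq0 invr_eq0 pnatr_eq0 orbF mxtrace_skew_sqr // oppr_eq0.
  by rewrite mxsqnorm_eq0 J0.
- exact: (skew_rank_le2_sandwich skJ (rJ e)) skJ.
- by rewrite muln1 mulrAC -mulrA divff ?pnatr_eq0 // mulr1.
Qed.

Variables (n : nat) (X : 'M[R]_(n, N)).
Hypothesis Xc : complement br X.
Hypothesis XJ2 : forall e, nonzero_on_center br e -> \rank (Jmx br X e) = 2%N.

Lemma Jmx_rank_le2 m (Y : 'M[R]_(m, N)) e : (\rank (Jmx br Y e) <= 2)%N.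
Proof.
have [A zY] := complement_row_decomp Y Xc; rewrite (Jmx_congr br2 e zY).
apply: leq_trans (mxrankM_maxl _ _) _; apply: leq_trans (mxrankM_maxr _ _) _.
have [->|/(Jmx_neq0_nonzero_on_center br2)/XJ2 -> //] := eqVneq (Jmx br X e) 0.
by rewrite mxrank0.
Qed.

Lemma complement_Jmx_neq0 m (Y : 'M[R]_(m, N)) e :
  complement br Y -> nonzero_on_center br e -> Jmx br Y e != 0.
Proof.
move=> Yc /XJ2 rJX; have [B zX] := complement_row_decomp X Yc.
apply: contra_eq_neq rJX; rewrite (Jmx_congr br2 e zX) => ->.
by rewrite mulmx0 mul0mx mxrank0.
Qed.


Lemma central_cbr y :
  central (cbr br) y <-> central br (lsubmx y) /\ central br (rsubmx y).
Proof.
split=> [zy | [zl zr] w]; last by rewrite /cbr !zl !zr subr0 add0r row_mx0.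
by split=> w; have := zy (row_mx w 0);
  rewrite /cbr row_mxKl row_mxKr !(br0r br2) subr0 add0r -row_mx0 => /eq_row_mx [].
Qed.

Lemma mul_cX k (Y : 'M[R]_(k, N)) (a : 'rV[R]_(k + k)) :
  a *m cX Y = row_mx (lsubmx a *m Y) (rsubmx a *m Y).
Proof. by rewrite -{1}(hsubmxK a) /cX mul_row_block !mulmx0 addr0 add0r. Qed.

Lemma complement_cbr : complement (cbr br) (cX X).
Proof.
case: Xc => indep decomp; split=> [a | w].
  rewrite mul_cX => /central_cbr; rewrite row_mxKl row_mxKr => -[/indep al /indep ar].
  by rewrite -(hsubmxK a) al ar row_mx0.
have [[al zl] [ar zr]] := (decomp (lsubmx w), decomp (rsubmx w)).
exists (row_mx al ar); apply/central_cbr.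
by rewrite mul_cX -{1 2}(hsubmxK w) opp_row_mx add_row_mx !row_mxKl !row_mxKr.
Qed.

Lemma Jmx_cbr e :
  Jmx (cbr br) (cX X) e =
  block_mx (Jmx br X (lsubmx e)) (Jmx br X (rsubmx e))
           (Jmx br X (rsubmx e)) (- Jmx br X (lsubmx e)).
Proof.
rewrite -[LHS]submxK; congr block_mx; apply/matrixP => i j;
  rewrite !mxE /cX /block_mx ?rowKu ?rowKd !row_row_mx !row0 /cbr;
  rewrite !row_mxKl !row_mxKr ?(br0l br2) ?(br0r br2) ?subr0 ?addr0 ?add0r ?sub0r;
  by rewrite eta_row_mx ?eta0 ?addr0 ?add0r ?etaN.
Qed.

Lemma nonzero_on_center_cbr e : nonzero_on_center (cbr br) e ->
  nonzero_on_center br (lsubmx e) \/ nonzero_on_center br (rsubmx e).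
Proof.
case=> y [/central_cbr [zl zr]]; rewrite -(hsubmxK y) eta_row_mx.
have [-> | el] := eqVneq (Defs.eta (lsubmx e) (lsubmx y)) 0.
  by rewrite add0r => er; right; exists (rsubmx y).
by move=> _; left; exists (lsubmx y).
Qed.

Lemma assumptionA_cbr : assumptionA (cbr br) (cX X).
Proof.
apply: (assumptionA_single_block (r := 2)) => // e nz; rewrite Jmx_cbr.
have sw e' : trace_sandwich (Jmx br X e').
  exact: skew_rank_le2_sandwich (Jmx_skew br2 X e') (Jmx_rank_le2 X e').
have sw12 := sw (lsubmx e + rsubmx e); rewrite Jmx_addr in sw12.
have J0 : (Jmx br X (lsubmx e) != 0) || (Jmx br X (rsubmx e) != 0).
  by case: (nonzero_on_center_cbr nz) => /(complement_Jmx_neq0 Xc) ->; rewrite ?orbT.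
move: (Jmx_skew br2 X (lsubmx e)) (Jmx_skew br2 X (rsubmx e)).
move: (sw (lsubmx e)) (sw (rsubmx e)) sw12 J0.
move: (Jmx br X (lsubmx e)) (Jmx br X (rsubmx e)) => J1 J2 sw1 sw2 sw12 J0 sk1 sk2.
exists ((\tr (J1 *m J1) + \tr (J2 *m J2)) / 2); last split.
- rewrite mulf_eq0 invr_eq0 pnatr_eq0 orbF !mxtrace_skew_sqr // -opprD oppr_eq0.
  by rewrite paddr_eq0 ?mxsqnorm_ge0 // !mxsqnorm_eq0 negb_and.
- exact: sandwich_block_cube.
- rewrite mulmx_block mxtrace_block !mxtraceD mulNmx mulmxN opprK.
  have n2 : (2 : R) != 0 by rewrite pnatr_eq0.
  by rewrite natrM; field.
Qed.

End RankTwo.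

Theorem proposition6p1 (R : realType) (N n : nat)
  (br : 'rV[R]_N -> 'rV[R]_N -> 'rV[R]_N) (X : 'M[R]_(n, N)) :
  two_step_bracket br ->
  complement br X ->
  (forall e : 'rV[R]_N, nonzero_on_center br e -> \rank (Jmx br X e) = 2%N) ->
  [/\ assumptionA br X,
      (forall (n' : nat) (X' : 'M[R]_(n', N)),
          complement br X' -> assumptionA br X') &
      complement (cbr br) (cX X) /\ assumptionA (cbr br) (cX X)].
Proof.
move=> br2 Xc XJ2.
have assumA n' (X' : 'M[R]_(n', N)) : complement br X' -> assumptionA br X'.
  move=> X'c; apply: (assumptionA_rank_le2 br2) => e.
    exact: (Jmx_rank_le2 br2 Xc XJ2).
  exact: (complement_Jmx_neq0 br2 XJ2 X'c).
split; [exact: assumA | exact: assumA | split].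
- exact: complement_cbr.
- exact: assumptionA_cbr.
Qed.
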